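(* With the conventions $H^{(t)}_0(x)=1$ and $H^{(t)}_m(x)=0$ for $m<0$, for all $n\ge0$, \[ H^{(t)}_{n+1}(x)=x\,H^{(t)}_n(x)-\binom{n}{t}\frac{(t+1)!}{2}\,H^{(t)}_{n-t}(x). \]
   Context: Fix an integer $t\ge1$. A $t$-path in the complete graph $K_n$ (vertices $1,\dots,n$) is a subgraph isomorphic to a path with $t$ edges (on a given set of $t+1$ vertices there are $(t+1)!/2$ of them). The Hermite polynomial of order $t$ is $H^{(t)}_n(x)=\sum_F(-1)^{|F|}x^{\,n-(t+1)|F|}$, the sum over all families $F$ of pairwise vertex-disjoint $t$-paths in $K_n$. *)

From HB Require Import structures.
From mathcomp Require Import all_boot all_order all_algebra.
Set Implicit Arguments. Unset Strict Implicit. Unset Printing Implicit Defensive.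
Import GRing.Theory.
Local Open Scope ring_scope.

(* Vertices of K_n are 'I_n; an edge is a 2-subset of 'I_n; a subgraph (without
   isolated vertices) is given by its edge set E : {set {set 'I_n}}. *)

Definition is_tpath (t n : nat) (E : {set {set 'I_n}}) : bool :=
  [exists s : (t.+1).-tuple 'I_n,
     uniq s &&
     (E == [set [set tnth s (widen_ord (leqnSn t) i); tnth s (lift ord0 i)]
              | i : 'I_t])].

Definition vset (n : nat) (E : {set {set 'I_n}}) : {set 'I_n} :=
  \bigcup_(e in E) e.

Definition tpath_family (t n : nat) (F : {set {set {set 'I_n}}}) : bool :=
  [forall P in F, is_tpath t P] &&
  [forall P in F, forall Q in F, (P != Q) ==> [disjoint vset P & vset Q]].

Definition hermite (t n : nat) : {poly int} :=
  \sum_(F : {set {set {set 'I_n}}} | tpath_family t F)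
     (-1) ^+ #|F| * 'X^(n - t.+1 * #|F|).

(* The proof works with the Hermite polynomial hermite_on A of the complete
   graph on an arbitrary finite vertex set A: the signed sum over packings F
   (families of vertex-disjoint t-paths inside A) of x^(|A| - (t+1)|F|).
   Fixing a vertex a of A, a packing either avoids a -- these are the packings
   of A :\ a, giving x * hermite_on (A :\ a) -- or contains a unique path P
   through a, and removing P is a bijection onto the packings of
   A :\: vertices P, giving - hermite_on (A :\: vertices P) (hermite_on_rec).
   Separately, the t-paths through a in an (m+1)-set are counted by double
   counting injective (t+1)-tuples: each path is traversed by exactly two of
   them (a simple path is determined by its edges up to reversal), so there
   are binom(m, t) (t+1)!/2 of them (card_tpaths_through).
   By strong induction hermite_on A depends only on |A|, and the recursion
   becomes the stated one once hermite t n is identified with hermite_on of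
   the full vertex set 'I_n. *)

From HB Require Import structures.
From mathcomp Require Import all_boot all_order all_algebra.
Import GRing.Theory.
Set Implicit Arguments. Unset Strict Implicit. Unset Printing Implicit Defensive.

Section WalkEdges.
Variable T : finType.
Implicit Types (s : seq T) (x y v : T) (E : {set {set T}}).

Fixpoint walk_edges s : {set {set T}} :=
  match s with
  | x :: ((y :: _) as r) => [set x; y] |: walk_edges r
  | _ => set0
  end.

Definition vertices E : {set T} := \bigcup_(e in E) e.

Definition degree E v : nat := \sum_(e in E) (v \in e).

Lemma walk_edges_cons x y r :
  walk_edges [:: x, y & r] = [set x; y] |: walk_edges (y :: r).
Proof. by []. Qed.

Lemma walk_edges_sub s e : e \in walk_edges s -> {subset e <= s}.
Proof.
elim: s => [|x [|y r] IH]; try by rewrite inE.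
rewrite walk_edges_cons => /setU1P [-> z|/IH H z /H zi]; last by rewrite inE zi orbT.
by rewrite !inE => /orP[]/eqP->; rewrite eqxx ?orbT.
Qed.

Lemma walk_edges_notin x y r :
  x \notin y :: r -> [set x; y] \notin walk_edges (y :: r).
Proof.
by move=> xn; apply/negP => /walk_edges_sub H; move: xn; rewrite H // !inE eqxx.
Qed.

Lemma walk_edges_eq0 s : (walk_edges s == set0) = (size s < 2).
Proof.
case: s => [|x [|y r]]; try by rewrite /= eqxx.
by apply/negbTE/set0Pn; exists [set x; y]; rewrite walk_edges_cons setU11.
Qed.

Lemma vertices_walk s : 1 < size s -> vertices (walk_edges s) = [set z in s].
Proof.
elim: s => [|x [|y r] IH] //= _.
rewrite /vertices bigcup_setU big_set1; case: r IH => [|z r] IH.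
  by rewrite /= big_set0 setU0; apply/setP => w; rewrite !inE.
rewrite -walk_edges_cons; have:= IH isT; rewrite /vertices => ->.
by apply/setP => w; rewrite !inE; case: (w == x); case: (w == y).
Qed.

Lemma degree_notin s v : v \notin s -> degree (walk_edges s) v = 0.
Proof.
move=> vn; rewrite /degree big1 // => e /walk_edges_sub H.
by case: (boolP (v \in e)) => // /H; rewrite (negbTE vn).
Qed.

Lemma degree_cons x y r v : x \notin y :: r ->
  degree (walk_edges [:: x, y & r]) v = (v \in [set x; y]) + degree (walk_edges (y :: r)) v.
Proof. by move=> xn; rewrite /degree walk_edges_cons big_setU1 //= walk_edges_notin. Qed.

Lemma degree_end x s v : uniq (x :: s) -> s != [::] ->
  (degree (walk_edges (x :: s)) v == 1) = (v == x) || (v == last x s).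
Proof.
elim: s x => [|y r IH] x //= /andP[xn ur] _.
rewrite degree_cons //; case: r IH ur xn => [|z r] IH ur xn.
  by rewrite /degree /= big_set0 addn0 !inE; case: (_ || _).
have IHy := IH y ur isT; move: ur => /andP[yn _].
have [->|vx] := eqVneq v x; first by rewrite degree_notin // set21.
move: IHy; have [->|vy] := eqVneq v y => IHy.
  move/eqP: IHy => /= ->; rewrite set22 /=; apply/esym/negbTE.
  by apply: contra yn => /eqP ->; apply: mem_last.
by rewrite !inE (negbTE vx) (negbTE vy) /= IHy.
Qed.

Lemma walk_edges_rcons w s z :
  walk_edges (rcons (w :: s) z) = [set last w s; z] |: walk_edges (w :: s).
Proof.
elim: s w => [|y s IH] w //.
by rewrite rcons_cons [rcons (y :: s) z]rcons_cons walk_edges_cons -rcons_cons IH setUCA.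
Qed.

Lemma walk_edges_rev s : walk_edges (rev s) = walk_edges s.
Proof.
elim: s => [|x [|y r] IH] //.
rewrite rev_cons walk_edges_cons -IH.
case E: (rev (y :: r)) => [|w u]; first by move/(congr1 size): E; rewrite size_rev.
rewrite walk_edges_rcons; congr (_ |: _); rewrite setUC; congr [set _; _].
by have := congr1 rev E; rewrite revK (lastI w u) rev_rcons => -[->].
Qed.

Lemma walk_edges_headK x s s' : uniq (x :: s) -> uniq (x :: s') -> s != [::] ->
  walk_edges (x :: s') = walk_edges (x :: s) -> s' = s.
Proof.
elim: s x s' => [|y r IH] x s' // ux ux' _.
case: s' ux' => [|y' r'] ux' E.
  by move: (walk_edges_eq0 [:: x, y & r]); rewrite -E /= eqxx.
have xn : x \notin y :: r by case/andP: ux.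
have xn' : x \notin y' :: r' by case/andP: ux'.
have yy : y' = y.
  have : [set x; y'] \in walk_edges [:: x, y & r] by rewrite -E walk_edges_cons setU11.
  rewrite walk_edges_cons => /setU1P [/setP/(_ y')|/walk_edges_sub/(_ x)].
    have yx : y' != x by apply: contraNneq xn' => ->; rewrite inE eqxx.
    by rewrite set22 !inE (negbTE yx) /= => /esym/eqP.
  by move=> H; have := H (set21 _ _); rewrite (negbTE xn).
subst y'.
have E' : walk_edges (y :: r') = walk_edges (y :: r).
  rewrite -(setU1K (walk_edges_notin xn)) -walk_edges_cons -E walk_edges_cons.
  by rewrite setU1K // walk_edges_notin.
case: r IH ux E E' xn => [|z r] IH ux E E' xn.
  by move: (walk_edges_eq0 (y :: r')); rewrite E' /= eqxx; case: (r').
by congr (_ :: _); apply: (IH y); case/andP: ux; case/andP: ux'.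
Qed.

(* A simple path with at least one edge is determined by its edge set up to
   reversal: the two vertices of degree one are its possible starting points. *)
Lemma walk_edges_inj s s' : uniq s -> uniq s' -> 1 < size s ->
  walk_edges s' = walk_edges s -> s' = s \/ s' = rev s.
Proof.
case: s => [|x s1] // us us' hs E.
have s1n : s1 != [::] by case: s1 hs {us E}.
case: s' us' E => [|x' s1'] us' E.
  by move: (walk_edges_eq0 (x :: s1)); rewrite -E /= eqxx ltnNge hs.
have s1n' : s1' != [::].
  case: s1' {us'} E => // E.
  by move: (walk_edges_eq0 (x :: s1)); rewrite -E /= eqxx ltnNge hs.
have := @degree_end x' s1' x' us' s1n'.
rewrite eqxx orTb E degree_end // => /orP[/eqP ex|/eqP el].
  by left; subst x'; rewrite (walk_edges_headK us us' s1n E).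
right; move: us E; rewrite (lastI x s1) rev_rcons -el.
rewrite -(rev_uniq (rcons _ _)) rev_rcons => us E.
have nn : rev (belast x s1) != [::] by rewrite -size_eq0 size_rev size_belast size_eq0.
by rewrite (walk_edges_headK us us' nn) // E -walk_edges_rev rev_rcons.
Qed.

End WalkEdges.

Section TPaths.
Variables (T : finType) (t : nat).
Hypothesis t_gt0 : 0 < t.
Implicit Types (A : {set T}) (E P : {set {set T}}).

Definition tpath E : bool :=
  [exists s : (t.+1).-tuple T, uniq s && (E == walk_edges s)].

Lemma tpathP E : tpath E -> exists2 s : (t.+1).-tuple T, uniq s & E = walk_edges s.
Proof. by case/existsP => s /andP[us /eqP ->]; exists s. Qed.

Lemma vertices_tuple (s : (t.+1).-tuple T) : vertices (walk_edges s) = [set z in s].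
Proof. by rewrite vertices_walk // size_tuple ltnS. Qed.

Lemma card_tpath_vertices E : tpath E -> #|vertices E| = t.+1.
Proof.
case/tpathP => s us ->; rewrite vertices_tuple cardsE.
by move/card_uniqP: us => ->; rewrite size_tuple.
Qed.

Lemma tpath_vertices_neq0 E : tpath E -> vertices E != set0.
Proof. by move/card_tpath_vertices => h; rewrite -card_gt0 h. Qed.

Definition tpath_through A a E : bool :=
  [&& tpath E, vertices E \subset A & a \in vertices E].

Lemma tuple_neq_rev (s : (t.+1).-tuple T) : uniq s -> s != rev_tuple s.
Proof.
move=> us; apply/negP => /eqP /(congr1 val) /=.
have : 1 < size s by rewrite size_tuple ltnS.
case: (val s) us => [|x [|y r]] //= us _.
rewrite rev_cons (lastI y r) rev_rcons /= => -[E] _.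
by move: us; rewrite E mem_last.
Qed.

Lemma tuples_of_tpath (s0 : (t.+1).-tuple T) : uniq s0 ->
  [set s : (t.+1).-tuple T | uniq s && (walk_edges s == walk_edges s0)]
    = [set s0; rev_tuple s0].
Proof.
move=> us0; apply/setP => s; rewrite !inE; apply/idP/orP.
  case/andP=> us /eqP E; have := walk_edges_inj us0 us _ E; rewrite size_tuple ltnS.
  by case=> // H; [left | right]; apply/eqP/val_inj.
by case=> /eqP ->; rewrite /= ?rev_uniq ?walk_edges_rev us0 eqxx.
Qed.

(* Injective (t+1)-tuples of elements of A that contain a: all injective
   tuples over A minus those over A :\ a, i.e. (m+1)^_(t+1) - m^_(t+1). *)
Lemma card_tuples_through A a m : a \in A -> #|A| = m.+1 ->
  #|[set s : (t.+1).-tuple T | [&& all (mem A) s, uniq s & a \in s]]|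
    = t.+1 * m ^_ t.
Proof.
move=> aA cA.
pose U (B : {set T}) := [set s : (t.+1).-tuple T | all (mem B) s & uniq s].
have cU (B : {set T}) : #|U B| = #|B| ^_ t.+1 by rewrite card_uniq_tuples.
have cAa : #|A :\ a| = m by move: cA; rewrite (cardsD1 a) aA => -[].
have -> : [set s : (t.+1).-tuple T | [&& all (mem A) s, uniq s & a \in s]]
    = U A :\: U (A :\ a).
  have allD1 (r : seq T) : all (mem (A :\ a)) r = all (mem A) r && (a \notin r).
    elim: r => [|x r /= ->] //; rewrite !inE (eq_sym x) negb_or.
    by case: (a != x); case: (x \in A); rewrite ?andbF.
  apply/setP => s; rewrite !inE allD1.
  by case: (all _ _); case: (uniq s); case: (a \in s).
have sub : U (A :\ a) \subset U A.
  apply/subsetP => s; rewrite !inE => /andP[al ->]; rewrite andbT.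
  by apply/allP => x /(allP al); rewrite !inE => /andP[].
rewrite cardsD (setIidPr sub) !cU cA cAa ffactSS ffactnSr.
rewrite [m ^_ t * _]mulnC -mulnBl.
case: (leqP t m) => tm; last by rewrite ffact_small ?muln0.
by rewrite subSn ?leq_subr // subKn.
Qed.

Lemma tpath_through_tuple A a (s : (t.+1).-tuple T) : uniq s ->
  tpath_through A a (walk_edges s) = all (mem A) s && (a \in s).
Proof.
move=> us; rewrite /tpath_through vertices_tuple inE.
have -> : tpath (walk_edges s) by apply/existsP; exists s; rewrite us eqxx.
rewrite /= andbC [RHS]andbC; case: (a \in s) => //=.
by apply/subsetP/allP => H x; [move=> xs; apply: H; rewrite inE | rewrite inE => /H].
Qed.

(* The number of t-paths through a fixed vertex a of an (m+1)-set A is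
   binom(m, t) (t+1)!/2: the (t+1) m^_t injective tuples through a are mapped
   two-to-one onto these paths. *)
Lemma card_tpaths_through A a m : a \in A -> #|A| = m.+1 ->
  #|[set P | tpath_through A a P]| = 'C(m, t) * ((t.+1)`! %/ 2).
Proof.
move=> aA cA.
set S := [set s : (t.+1).-tuple T | [&& all (mem A) s, uniq s & a \in s]].
have cardS : #|S| = t.+1 * m ^_ t := card_tuples_through aA cA.
have inS s : (s \in S) = uniq s && tpath_through A a (walk_edges s).
  by rewrite inE; case us: (uniq s) => /=; rewrite ?tpath_through_tuple ?andbF.
clearbody S.
have double : #|S| = #|[set P | tpath_through A a P]| * 2.
  rewrite -sum1_card (partition_big (fun s : (t.+1).-tuple T => walk_edges s)
                          (tpath_through A a)) /=.
    rewrite cardsE -sum_nat_const; apply: eq_bigr => P thrP.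
    have /andP[/tpathP[s0 us0 EP] _] := thrP; rewrite EP.
    have : #|[set s0; rev_tuple s0]| = 2 by rewrite cards2 tuple_neq_rev.
    rewrite sum1dep_card -tuples_of_tpath // => <-.
    by apply: eq_card => s; rewrite !inE inS; case: eqP => [->|]; rewrite ?andbF // -EP thrP !andbT.
  by move=> s; rewrite inS => /andP[].
have two_dvd : 2 %| (t.+1)`! by apply: dvdn_fact; rewrite /= ltnS t_gt0.
apply/eqP; rewrite -(eqn_pmul2r (isT : 0 < 2)) -double.
rewrite cardS -mulnA divnK //.
by rewrite -bin_ffact factS mulnCA mulnA.
Qed.

End TPaths.

Local Open Scope ring_scope.

Section Packings.
Variables (T : finType) (t : nat).
Hypothesis t_gt0 : (0 < t)%N.
Implicit Types (A : {set T}) (a : T) (P Q : {set {set T}}) (F : {set {set {set T}}}).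

Definition packing A F : bool :=
  [forall P in F, tpath t P && (vertices P \subset A)] &&
  [forall P in F, forall Q in F, (P != Q) ==> [disjoint vertices P & vertices Q]].

Lemma packingP A F : reflect
  ({in F, forall P, tpath t P && (vertices P \subset A)} /\
   {in F &, forall P Q, P != Q -> [disjoint vertices P & vertices Q]}) (packing A F).
Proof.
apply: (iffP andP) => [[/forall_inP H1 /forall_inP H2] | [H1 H2]]; split.
- exact: H1.
- by move=> P Q PF QF; move: (H2 P PF) => /forall_inP/(_ Q QF)/implyP.
- exact/forall_inP.
- by apply/forall_inP => P PF; apply/forall_inP => Q QF; apply/implyP; apply: H2.
Qed.

(* The t+1 vertex sets of the paths of a packing are disjoint subsets of A. *)
Lemma packing_size A F : packing A F -> (t.+1 * #|F| <= #|A|)%N.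
Proof.
case/packingP => H1 H2.
have inj : {in F &, injective (@vertices T)}.
  move=> P Q PF QF E; apply/eqP; apply: contraT => nPQ.
  have := H2 P Q PF QF nPQ; rewrite -E -setI_eq0 setIid.
  by have /andP[/(tpath_vertices_neq0 t_gt0) /negbTE -> _] := H1 P PF.
have tI : trivIset (@vertices T @: F).
  apply/trivIsetP => X Y /imsetP[P PF ->] /imsetP[Q QF ->] nXY.
  by apply: H2 => //; apply: contraNneq nXY => ->.
have cov : cover (@vertices T @: F) \subset A.
  by apply/bigcupsP => X /imsetP[P PF ->]; have /andP[] := H1 P PF.
apply: leq_trans (subset_leq_card cov); move: tI => /eqP <-.
rewrite (eq_bigr (fun _ => t.+1)); last first.
  by move=> X /imsetP[P PF ->]; have /andP[/(card_tpath_vertices t_gt0) -> _] := H1 P PF.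
by rewrite sum_nat_const card_in_imset // mulnC.
Qed.

Definition weight (k : nat) F : {poly int} := (-1) ^+ #|F| * 'X^(k - t.+1 * #|F|).

Definition hermite_on A : {poly int} := \sum_(F | packing A F) weight #|A| F.

Lemma hermite_on_set0 : hermite_on set0 = 1.
Proof.
rewrite /hermite_on (big_pred1 set0) /weight ?cards0 ?expr0 ?mulr1 // => F /=.
apply/idP/eqP => [/packingP[H1 _] | ->]; last by apply/packingP; split=> P; rewrite inE.
apply/setP => P; rewrite inE; apply/negP => PF.
have /andP[/(tpath_vertices_neq0 t_gt0) n0 sub0] := H1 P PF.
by move: n0; rewrite -subset0 sub0.
Qed.

Definition covers a F : bool := [exists P in F, a \in vertices P].

Lemma packing_avoiding A a F : a \in A ->
  (packing A F && ~~ covers a F) = packing (A :\ a) F.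
Proof.
move=> aA; rewrite /covers negb_exists_in.
apply/andP/packingP => [[/packingP[H1 H2] /forall_inP H3] | [H1 H2]].
  split => // P PF; have /andP[-> s] := H1 P PF.
  by rewrite subsetD1 s H3.
have sub P : P \in F -> tpath t P && (vertices P \subset A) && (a \notin vertices P).
  by move=> PF; have /andP[-> s] := H1 P PF; rewrite -subsetD1.
split; first by apply/packingP; split => // P /sub/andP[].
by apply/forall_inP => P /sub/andP[].
Qed.

Lemma packing_through_uniq A a F P Q : packing A F -> P \in F -> Q \in F ->
  a \in vertices P -> a \in vertices Q -> P = Q.
Proof.
case/packingP => _ H2 PF QF aP aQ; apply/eqP; apply: contraT => nPQ.
have := H2 P Q PF QF nPQ; rewrite -setI_eq0 => /eqP/setP/(_ a).
by rewrite !inE aP aQ.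
Qed.

Lemma packing_extend A a P F : tpath_through t A a P ->
  [&& packing A (P |: F), a \in vertices P & (P |: F) :\ P == F]
    = packing (A :\: vertices P) F.
Proof.
case/and3P => tP sP aP; rewrite aP /=; apply/andP/packingP.
  case=> /packingP[H1 H2] /eqP E.
  have PF : P \notin F by rewrite -E setD11.
  split; last by move=> Q R QF RF; apply: H2; apply: setU1r.
  move=> Q QF; have /andP[-> sQ] := H1 Q (setU1r _ QF).
  rewrite subsetD sQ; apply: (H2 Q P (setU1r _ QF) (setU11 _ _)).
  by apply: contraNneq PF => <-.
case=> H1 H2.
have sub Q : Q \in F -> vertices Q \subset A.
  by move=> QF; have /andP[_] := H1 Q QF; rewrite subsetD => /andP[].
have dis Q : Q \in F -> [disjoint vertices Q & vertices P].
  by move=> QF; have /andP[_] := H1 Q QF; rewrite subsetD => /andP[].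
have PF : P \notin F.
  by apply/negP => /dis; rewrite -setI_eq0 setIid; apply/negP/set0Pn; exists a.
rewrite setU1K // eqxx; split => //; apply/packingP; split.
  by move=> Q /setU1P[->|QF]; [rewrite tP | have /andP[-> _] := H1 Q QF; rewrite sub].
move=> Q R /setU1P[->|QF] /setU1P[->|RF] QR.
- by rewrite eqxx in QR.
- by rewrite disjoint_sym dis.
- by rewrite dis.
- exact: H2.
Qed.

Lemma sum_avoiding A a : a \in A ->
  \sum_(F | packing A F && ~~ covers a F) weight #|A| F = 'X * hermite_on (A :\ a).
Proof.
move=> aA; rewrite /hermite_on big_distrr /=.
apply: eq_big => [F | F FA]; first exact: packing_avoiding.
have := packing_size (etrans (esym (packing_avoiding F aA)) FA).
by rewrite /weight (cardsD1 a A) aA add1n => /subSn ->; rewrite exprS mulrCA.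
Qed.

(* A packing covering a splits uniquely as a path P through a plus a packing
   of A :\: vertices P, which has one path less. *)
Lemma sum_covering A a :
  \sum_(F | packing A F && covers a F) weight #|A| F
    = - \sum_(P | tpath_through t A a P) hermite_on (A :\: vertices P).
Proof.
rewrite (eq_bigr (fun F => \sum_(P | (P \in F) && (a \in vertices P)) weight #|A| F));
  last first.
  move=> F /andP[FA /exists_inP[P0 P0F aP0]]; rewrite (big_pred1 P0) // => P /=.
  by apply/andP/eqP => [[PF aP] | ->] //; apply: packing_through_uniq FA PF P0F aP aP0.
rewrite (exchange_big_dep (tpath_through t A a)) /=; last first.
  move=> F P /andP[/packingP[H1 _] _] /andP[PF aP].
  by have /andP[tP sP] := H1 P PF; rewrite /tpath_through tP sP aP.
rewrite -sumrN; apply: eq_bigr => P thrP.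
rewrite /hermite_on -sumrN (reindex_onto (fun F' => P |: F') (fun F => F :\ P)) /=;
  last by move=> F /andP[_ /andP[PF _]]; rewrite setD1K.
have /and3P[tP sP aP] := thrP.
apply: eq_big => F'.
  rewrite -(packing_extend _ thrP) setU11 aP /= !andbT.
  have -> : covers a (P |: F') by apply/exists_inP; exists P; rewrite ?setU11.
  by rewrite andbT.
move=> /andP[_ /eqP E]; have PF : P \notin F' by rewrite -E setD11.
rewrite /weight cardsU1 PF add1n exprS mulN1r mulNr; congr (- _).
by rewrite mulnS subnDA cardsD (setIidPr sP) (card_tpath_vertices t_gt0 tP).
Qed.

(* Deleting a vertex a: either a is uncovered, or it lies on a unique path. *)
Lemma hermite_on_rec A a : a \in A ->
  hermite_on A
    = 'X * hermite_on (A :\ a) - \sum_(P | tpath_through t A a P) hermite_on (A :\: vertices P).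
Proof.
move=> aA; rewrite {1}/hermite_on (bigID (covers a)) /= addrC.
by rewrite sum_avoiding // sum_covering.
Qed.

End Packings.

Notation path_count t m := (('C(m, t) * ((t.+1)`! %/ 2))%N)%:R.

Lemma hermite_on_step t k : (0 < t)%N ->
  (forall (U V : finType) (B : {set U}) (C : {set V}),
     #|B| = #|C| -> (#|B| <= k)%N -> hermite_on t B = hermite_on t C) ->
  forall (U : finType) (B : {set U}), #|B| = k.+1 ->
  hermite_on t B
    = 'X * hermite_on t [set: 'I_k] - path_count t k * hermite_on t [set: 'I_(k - t)].
Proof.
move=> t_gt0 inv U B cB.
have /set0Pn[b bB] : B != set0 by rewrite -card_gt0 cB.
have cBb : #|B :\ b| = k by move: cB; rewrite (cardsD1 b) bB => -[].
rewrite (hermite_on_rec t_gt0 bB) (inv _ _ _ [set: 'I_k]) ?cardsT ?card_ord ?cBb //.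
congr (_ - _); rewrite -(card_tpaths_through t_gt0 bB cB) cardsE -sum1_card.
rewrite natr_sum mulr_suml; apply: eq_bigr => P /and3P[tP sP _].
have cBP : #|B :\: vertices P| = (k - t)%N.
  by rewrite cardsD (setIidPr sP) (card_tpath_vertices t_gt0 tP) cB subSS.
by rewrite mul1r (inv _ _ _ [set: 'I_(k - t)]) ?cardsT ?card_ord ?cBP ?leq_subr.
Qed.

Lemma hermite_on_card t (U V : finType) (B : {set U}) (C : {set V}) : (0 < t)%N ->
  #|B| = #|C| -> hermite_on t B = hermite_on t C.
Proof.
move=> t_gt0; have le_inv m (U' V' : finType) (B' : {set U'}) (C' : {set V'}) :
    #|B'| = #|C'| -> (#|B'| <= m)%N -> hermite_on t B' = hermite_on t C'.
  elim: m U' V' B' C' => [|k IH] U' V' B' C' cBC.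
    rewrite leqn0 => /eqP B0; move: (B0); rewrite cBC => C0.
    by rewrite (cards0_eq B0) (cards0_eq C0) !hermite_on_set0.
  rewrite leq_eqVlt => /orP[/eqP cB | ]; last exact: IH.
  rewrite (hermite_on_step t_gt0 IH cB).
  by rewrite (hermite_on_step t_gt0 IH (etrans (esym cBC) cB)).
by move=> cBC; apply: (le_inv #|B|).
Qed.

Lemma consecutive_pairs_walk_edges (U : finType) k (s : k.+1.-tuple U) :
  [set [set tnth s (widen_ord (leqnSn k) i); tnth s (lift ord0 i)] | i : 'I_k]
    = walk_edges s.
Proof.
elim: k s => [|k IH] s.
  case/tupleP: s => x s; rewrite tuple0 /=.
  by apply/setP => e; rewrite inE; apply/negP => /imsetP[[]].
case/tupleP: s => x s; case/tupleP: s IH => y s IH.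
have split_first (f : 'I_k.+1 -> {set U}) :
    [set f i | i : 'I_k.+1] = f ord0 |: [set f (lift ord0 i) | i : 'I_k].
  apply/setP => e; apply/imsetP/setU1P => [[i _ ->] | [-> | /imsetP[j _ ->]]].
  - by case: (unliftP ord0 i) => [j ->|->]; [right; apply/imsetP; exists j | left].
  - by exists ord0.
  - by exists (lift ord0 j).
have -> : walk_edges [tuple of x :: [tuple of y :: s]]
    = [set x; y] |: walk_edges [tuple of y :: s] by [].
rewrite split_first -(IH [tuple of y :: s]); congr (_ |: _).
by apply: eq_imset => j; rewrite !(tnth_nth x) /= !add0n.
Qed.

Lemma hermite_hermite_on t n : hermite t n = hermite_on t [set: 'I_n].
Proof.
rewrite /hermite /hermite_on cardsT card_ord; apply: eq_bigl => F.
rewrite /tpath_family /packing; congr (_ && _); apply: eq_forallb => P.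
rewrite subsetT andbT /is_tpath /tpath; congr (_ ==> _); apply: eq_existsb => s.
by rewrite consecutive_pairs_walk_edges.
Qed.

Theorem mainTheorem11 (t n : nat) (ht : (1 <= t)%N) :
  hermite t n.+1 =
    'X * hermite t n
    - (('C(n, t) * ((t.+1)`! %/ 2))%N)%:R
      * (if (t <= n)%N then hermite t (n - t) else 0).
Proof.
have inv (U V : finType) (B : {set U}) (C : {set V}) :
    #|B| = #|C| -> (#|B| <= n)%N -> hermite_on t B = hermite_on t C.
  by move=> cBC _; apply: hermite_on_card.
rewrite !hermite_hermite_on (hermite_on_step ht inv) ?cardsT ?card_ord //.
by case: leqP => tn //; rewrite bin_small // mul0n mulr0 mul0r.
Qed.
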